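(* In every execution of the protocol Fever, the following two properties hold. (1) If a correct processor is in view $v$ at time $\mathtt t$ and in view $v'$ at a time $\mathtt t'\ge\mathtt t$, then $v'\ge v$. (2) If $v$ is initial and $0<j<k$, then no QC for view $v+j$ is formed before a QC for view $v+j-1$ has been formed.
   Context: Model. There is a set $\Pi=\{p_0,\dots,p_{n-1}\}$ of $n$ processors, and $t$ is the largest integer $<n/3$. At most $t$ processors are Byzantine (arbitrary behaviour); the others are correct. Authenticated channels, unforgeable signatures and threshold signatures are assumed. Each processor $p$ has a local clock $c(p)$. All clocks advance at the same rate as real time, except when the protocol forwards them. $\Gamma>0$ is a known constant. Underlying protocol. Views $v\in\mathbb N_{\ge0}$; a fixed integer $k\ge3$; $\mathtt{lead}(v)=p_i$ with $i=\lfloor v/k\rfloor\bmod n$; $v$ is initial iff $v\bmod k=0$. A quorum certificate (QC) for view $v$ is a threshold signature of $n-t$ distinct processors, and a correct processor contributes to a QC for view $v$ only while in view $v$. Protocol Fever. Set $\mathtt c_v=\Gamma v$. Each correct processor $p$ keeps a current view (initially $0$) and behaves as follows. (a) When $c(p)=\mathtt c_v$ for an initial view $v$, $p$ enters view $v$ and sends a $\mathtt{view}\ v$ message to $\mathtt{lead}(v)$. (b) Upon first seeing a QC for a view $v'$ at least its current view, $p$ enters view $v'+1$, and if $c(p)<\mathtt c_{v'+1}$ it sets $c(p):=\mathtt c_{v'+1}$. (c) Upon first seeing a view certificate (VC) for an initial view $v'$ greater than its current view, $p$ enters view $v'$, and if $c(p)<\mathtt c_{v'}$ it sets $c(p):=\mathtt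 c_{v'}$. (d) If $p=\mathtt{lead}(v')$ for some $v'$ at least its current view, then upon first receiving $\mathtt{view}\ v'$ messages from $t+1$ distinct processors, $p$ forms a VC (threshold signature) for $v'$ and sends it to all processors. A non-initial view is entered by a correct processor only via rule (b). *)

From HB Require Import structures.
From mathcomp Require Import all_boot all_order all_algebra.
From mathcomp Require Import reals.
Set Implicit Arguments. Unset Strict Implicit. Unset Printing Implicit Defensive.
Import Order.TTheory GRing.Theory Num.Theory.
Local Open Scope ring_scope.

(* t = largest integer < n/3 (for n >= 1): t = (n-1) div 3 *)
Definition fault_bound (n : nat) : nat := (n.-1 %/ 3)%N.

Section Fever.
Variable R : realType.
Variable n : nat.

(* Global state: real time, current view and local clock of every processor
   (only meaningful for correct processors). *)
Record state := mkState {
  st_time  : R;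
  st_view  : 'I_n -> nat;
  st_clock : 'I_n -> R }.

Inductive event :=
| Elapse     of R
| TimerEnter of 'I_n & nat          (* rule (a): p enters initial view v, sends [view v] to lead(v) *)
| QCEnter    of 'I_n & nat          (* rule (b): p sees a QC for v', enters v'+1 *)
| VCEnter    of 'I_n & nat          (* rule (c): p sees a VC for initial v', enters v' *)
| Share      of 'I_n & nat          (* p contributes its signature share to a QC for view v *)
| FormVC     of nat & {set 'I_n}    (* a VC for v is formed from [view v] msgs of the set S *)
| FormQC     of nat & {set 'I_n}.   (* a QC for v is formed from shares of the set S *)

Variable k : nat.
Variable Gamma : R.
Variable F : {set 'I_n}.            (* the Byzantine processors *)

Definition cv (v : nat) : R := Gamma * v%:R.
Definition initial (v : nat) : bool := (v %% k == 0)%N.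
Definition is_lead (p : 'I_n) (v : nat) : bool := (nat_of_ord p == (v %/ k) %% n)%N.

Definition upd {T : Type} (f : 'I_n -> T) (p : 'I_n) (x : T) : 'I_n -> T :=
  fun q => if q == p then x else f q.

Definition next (s : state) (e : event) : state :=
  match e with
  | Elapse d => mkState (st_time s + d) (st_view s) (fun p => st_clock s p + d)
  | TimerEnter p v => mkState (st_time s) (upd (st_view s) p v) (st_clock s)
  | QCEnter p v' => mkState (st_time s) (upd (st_view s) p v'.+1)
                      (upd (st_clock s) p (Num.max (st_clock s p) (cv v'.+1)))
  | VCEnter p v' => mkState (st_time s) (upd (st_view s) p v')
                      (upd (st_clock s) p (Num.max (st_clock s p) (cv v')))
  | _ => s
  end.

Definition QC_formed_at (ev : nat -> event) (i v : nat) : Prop :=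
  exists S, ev i = FormQC v S.
Definition VC_formed_at (ev : nat -> event) (i v : nat) : Prop :=
  exists S, ev i = FormVC v S.

Definition enabled (ev : nat -> event) (i : nat) (s : state) : Prop :=
  match ev i with
  | Elapse d => 0 <= d
  | TimerEnter p v => p \notin F /\ initial v /\ st_clock s p = cv v
  | QCEnter p v' =>
      p \notin F /\ (exists j, (j < i)%N /\ QC_formed_at ev j v') /\ (st_view s p <= v')%N
  | VCEnter p v' =>
      [/\ p \notin F, initial v', exists j, (j < i)%N /\ VC_formed_at ev j v'
        & (st_view s p < v')%N]
  | Share p v => p \notin F /\ st_view s p = v
  | FormVC v Sg =>
      [/\ ((fault_bound n).+1 <= #|Sg|)%N,
          (forall q, q \in Sg -> q \in F \/ exists j, (j < i)%N /\ ev j = TimerEnter q v)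
        & (forall p, is_lead p v -> p \notin F -> st_view s p <= v)%N]
  | FormQC v Sg =>
      (n - fault_bound n <= #|Sg|)%N /\
      (forall q, q \in Sg -> q \in F \/ exists j, (j < i)%N /\ ev j = Share q v)
  end.

(* An (infinite; finite ones can be padded with [Elapse 0]) execution of Fever:
   s i is the state before step i, ev i the i-th step. *)
Definition execution (ev : nat -> event) (s : nat -> state) : Prop :=
  (forall p, st_view (s 0%N) p = 0%N) /\
  (forall i, enabled ev i (s i) /\ s i.+1 = next (s i) (ev i)).

End Fever.

From Pilot Require Import Defs.
From HB Require Import structures.
From mathcomp Require Import all_boot all_order all_algebra.
From mathcomp Require Import reals.
From mathcomp Require Import zify.
Import Order.TTheory GRing.Theory Num.Theory.

Set Implicit Arguments.
Unset Strict Implicit.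
Unset Printing Implicit Defensive.

(* Views only grow: rules (b) and (c) only move to larger views, and rule (a)
   enters v when the clock reads cv v, while the invariant cv (view p) <= clock p
   (clocks never go back) shows that the current view is then at most v.
   A QC for a non-initial view v + j needs a share from some correct processor,
   which must then be in view v + j; since views start at 0 and v + j is not
   initial, that processor entered v + j by rule (b), after seeing a QC for
   v + j - 1. *)

Lemma exists_notin_of_card_lt (T : finType) (A B : {set T}) :
  (#|B| < #|A|)%N -> exists2 x, x \in A & x \notin B.
Proof.
move=> ltBA; case: (boolP (A \subset B)) => [/subset_leq_card leAB | /subsetPn //].
by move: (leq_trans ltBA leAB); rewrite ltnn.
Qed.

Lemma exists_step_into (f : nat -> nat) (a N : nat) :
  f 0%N <> a -> f N = a -> exists2 m, (m < N)%N & f m <> a /\ f m.+1 = a.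
Proof.
elim: N => [|N IH] f0 fN; first by rewrite fN in f0.
case: (eqVneq (f N) a) => [/(IH f0) [m ltmN fm] | fNa]; first by exists m => //; apply: ltnW.
by exists N => //; split => //; apply/eqP.
Qed.

Lemma noninitial_shift (k v j : nat) :
  initial k v -> (0 < j < k)%N -> ~~ initial k (v + j).
Proof.
move=> /eqP vk0 /andP [j0 jk].
by rewrite /initial -modnDml vk0 add0n modn_small // -lt0n.
Qed.

Lemma fault_bound_lt_quorum (n : nat) :
  (0 < n)%N -> (fault_bound n < n - fault_bound n)%N.
Proof. rewrite /fault_bound; lia. Qed.

Section Execution.
Variables (R : realType) (n k : nat) (Gamma : R) (F : {set 'I_n}).
Variables (ev : nat -> event R n) (s : nat -> state R n).
Hypothesis Gamma_gt0 : (0 < Gamma)%R.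
Hypothesis exec : execution k Gamma F ev s.

Let view_init : forall p, st_view (s 0%N) p = 0%N := exec.1.
Let step i : enabled k Gamma F ev i (s i) /\ s i.+1 = Defs.next Gamma (s i) (ev i) :=
  exec.2 i.

Lemma ler_cv (a b : nat) : (cv Gamma a <= cv Gamma b)%R = (a <= b)%N.
Proof. by rewrite /cv ler_pM2l // ler_nat. Qed.

(* The max with 0 covers view 0, whose starting clock may be negative. *)
Lemma cv_view_le_clock i p :
  (cv Gamma (st_view (s i) p) <= Num.max (st_clock (s i) p) 0)%R.
Proof.
elim: i p => [|i IH] p; first by rewrite view_init /cv mulr0 le_max lexx orbT.
have [en ->] := step i; move: en (IH p); rewrite /enabled /Defs.next.
case: (ev i) => [d|q v|q v|q v|q v|v S|v S] //=; rewrite /upd.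
- move=> d_ge0 /le_trans; apply.
  by rewrite ge_max !le_max lexx orbT andbT lerDl d_ge0.
- by move=> [_ [_ clock_q]] IHp; case: ifP => [/eqP -> | //]; rewrite clock_q le_max lexx.
- by move=> _ IHp; case: ifP => // _; rewrite !le_max lexx !orbT.
- by move=> _ IHp; case: ifP => // _; rewrite !le_max lexx !orbT.
Qed.

Lemma view_step_mono i p : (st_view (s i) p <= st_view (s i.+1) p)%N.
Proof.
have [en ->] := step i; move: en (cv_view_le_clock i p); rewrite /enabled /Defs.next.
case: (ev i) => [d|q v|q v|q v|q v|v S|v S] //=; rewrite /upd.
- move=> [_ [_ clock_q]]; case: ifP => [/eqP -> | //].
  have cv_ge0 : (0 <= cv Gamma v)%R by rewrite /cv mulr_ge0 // ltW.
  by rewrite clock_q (max_idPl cv_ge0) ler_cv.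
- by move=> [_ [_ view_le]]; case: ifP => [/eqP -> _ | //]; apply: (leq_trans view_le).
- by move=> [_ _ _ view_lt]; case: ifP => [/eqP -> _ | //]; apply: ltnW.
Qed.

Lemma view_mono p : {homo (fun i => st_view (s i) p) : i j / (i <= j)%N}.
Proof. exact: homo_leq leqnn leq_trans (fun i => view_step_mono i p). Qed.

Lemma view_entered_by_QC m q w :
  ~~ initial k w -> st_view (s m) q <> w -> st_view (s m.+1) q = w ->
  exists2 j, (j < m)%N & QC_formed_at ev j w.-1.
Proof.
move=> w_noninit view_m; have [en ->] := step m; move: en; rewrite /enabled /Defs.next.
case: (ev m) => [d|p v|p v|p v|p v|v S|v S] //=; rewrite /upd; case: ifP => // _.
- by move=> [_ [v_init _]] v_w; rewrite -v_w v_init in w_noninit.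
- by move=> [_ [[j [ltjm QCj]] _]] <-; exists j.
- by move=> [_ v_init _ _] v_w; rewrite -v_w v_init in w_noninit.
Qed.

Lemma QC_for_noninitial_view i q w :
  ~~ initial k w -> st_view (s i) q = w ->
  exists2 j, (j < i)%N & QC_formed_at ev j w.-1.
Proof.
move=> w_noninit view_i.
have view0 : st_view (s 0%N) q <> w.
  by rewrite view_init => w0; rewrite -w0 /initial mod0n in w_noninit.
have [m ltmi [view_m view_m1]] :=
  exists_step_into (f := fun i => st_view (s i) q) view0 view_i.
have [j ltjm QCj] := view_entered_by_QC w_noninit view_m view_m1.
by exists j => //; apply: ltn_trans ltmi.
Qed.

Lemma QC_has_correct_share i v :
  (0 < n)%N -> (#|F| <= fault_bound n)%N -> QC_formed_at ev i v ->
  exists q, [/\ q \notin F & exists2 j, (j < i)%N & st_view (s j) q = v].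
Proof.
move=> n_gt0 F_le [S evi]; have [en _] := step i.
move: en; rewrite /enabled evi => -[card_S signers].
have [q qS qF] : exists2 q, q \in S & q \notin F.
  apply: exists_notin_of_card_lt.
  exact: leq_ltn_trans F_le (leq_trans (fault_bound_lt_quorum n_gt0) card_S).
exists q; split => //; have [|[j [ltji evj]]] := signers q qS; first by rewrite (negbTE qF).
exists j => //; have [en _] := step j; move: en; rewrite /enabled evj.
by case.
Qed.

End Execution.

Theorem mainTheorem4 (R : realType) (n k : nat) (Gamma : R) (F : {set 'I_n})
    (ev : nat -> event R n) (s : nat -> state R n) :
  (0 < n)%N -> (3 <= k)%N -> (0 < Gamma)%R -> (#|F| <= fault_bound n)%N ->
  execution k Gamma F ev s ->
  (forall (p : 'I_n) (i j : nat), p \notin F -> (i <= j)%N ->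
     (st_view (s i) p <= st_view (s j) p)%N) /\
  (forall (v j i : nat), initial k v -> (0 < j < k)%N ->
     QC_formed_at ev i (v + j) ->
     exists i', (i' < i)%N /\ QC_formed_at ev i' (v + j - 1)).
Proof.
move=> n_gt0 _ Gamma_gt0 F_le exec; split.
  by move=> p i j _; apply: (view_mono Gamma_gt0 exec).
move=> v j i v_init j_bounds QCi.
have [q [_ [i1 lti1i view_q]]] := QC_has_correct_share exec n_gt0 F_le QCi.
have [i' lti'i1 QCi'] :=
  QC_for_noninitial_view exec (noninitial_shift v_init j_bounds) view_q.
by exists i'; split; [apply: ltn_trans lti1i | rewrite subn1].
Qed.
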